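(* For every state $x$ and every round $t\ge1$, \[ \sum_{i\in V}\frac{\operatorname{Var}[W_i(X^t)\mid X^{t-1}=x]}{s_i} \le \sum_{(i,j)} f_{ij}(x)\left(\frac{1}{s_i}+\frac{1}{s_j}\right), \] where the sum on the right runs over all ordered pairs $(i,j)$ of adjacent processors with $\ell_i(x)-\ell_j(x)>1/s_j$, and $f_{ij}(x)=\frac{\ell_i(x)-\ell_j(x)}{\alpha\, d_{ij}\,(1/s_i+1/s_j)}$.
   Context: $G=(V,E)$ is an undirected graph (processors as vertices); $\deg(i)$ is the degree and $d_{ij}=\max\{\deg(i),\deg(j)\}$. Processor $i$ has speed $s_i>0$; $s_{\max}=\max_i s_i$; $\alpha=4s_{\max}$. Task $\ell$ has weight $w_\ell\in(0,1]$. In state $x$, $W_i(x)$ is the total weight on processor $i$ and $\ell_i(x)=W_i(x)/s_i$. Protocol: in each round every task, independently, with $i$ its current processor, chooses a uniformly random neighbor $j$; if $\ell_i-\ell_j>1/s_j$ it moves to $j$ with probability $\frac{\deg(i)}{d_{ij}}\cdot\frac{\ell_i-\ell_j}{\alpha(1/s_i+1/s_j)W_i}$, otherwise stays. $X^t$ is the state after $t$ rounds. *)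

From mathcomp Require Import all_boot all_order all_algebra.
Set Implicit Arguments. Unset Strict Implicit. Unset Printing Implicit Defensive.
Import Order.TTheory GRing.Theory Num.Theory.
Local Open Scope ring_scope.

Section Protocol.
Variables (R : realFieldType) (V T : finType).
Variable e : rel V.
Variables (s : V -> R) (w : T -> R).

Definition state := {ffun T -> V}.

Definition deg (i : V) : nat := #|[set j | e i j]|.
Definition dmax (i j : V) : nat := maxn (deg i) (deg j).

Definition smax : R := \big[Num.max/0]_(i : V) s i.
Definition alpha : R := 4 * smax.

Definition load (x : state) (i : V) : R := \sum_(l : T | x l == i) w l.
Definition ell (x : state) (i : V) : R := load x i / s i.

(* probability that a task on i, having chosen neighbour j, moves to j *)
Definition move_prob (x : state) (i j : V) : R :=
  if 1 / s j < ell x i - ell x j then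
    (deg i)%:R / (dmax i j)%:R *
      ((ell x i - ell x j) / (alpha * (1 / s i + 1 / s j) * load x i))
  else 0.

(* one-round law of the new position of task l, from state x:
   the neighbour j is chosen uniformly (prob 1/deg i), then moves w.p. move_prob *)
Definition step_prob (x : state) (l : T) (j : V) : R :=
  let i := x l in
  if j == i then 1 - \sum_(k : V | e i k) (deg i)%:R^-1 * move_prob x i k
  else if e i j then (deg i)%:R^-1 * move_prob x i j else 0.

(* tasks act independently: product transition kernel P[X^t = y | X^{t-1} = x] *)
Definition kernel (x y : state) : R := \prod_(l : T) step_prob x l (y l).

Fixpoint law (mu : state -> R) (t : nat) (y : state) : R :=
  match t with
  | 0 => mu y
  | t'.+1 => \sum_(x : state) law mu t' x * kernel x y
  end.

(* E[f(X^t) | X^{t-1} = x], using the joint law P[X^{t-1}=x, X^t=y] *)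
Definition cond_exp (mu : state -> R) (t : nat) (x : state) (f : state -> R) : R :=
  (\sum_(y : state) law mu t.-1 x * kernel x y * f y) / law mu t.-1 x.

Definition cond_var (mu : state -> R) (t : nat) (x : state) (i : V) : R :=
  cond_exp mu t x (fun y => load y i ^+ 2) - (cond_exp mu t x (fun y => load y i)) ^+ 2.

Definition flow (x : state) (i j : V) : R :=
  (ell x i - ell x j) / (alpha * (dmax i j)%:R * (1 / s i + 1 / s j)).

End Protocol.

From mathcomp Require Import all_boot all_order all_algebra.
From mathcomp Require Import ring.
Set Implicit Arguments. Unset Strict Implicit. Unset Printing Implicit Defensive.
Import Order.TTheory GRing.Theory Num.Theory.
Local Open Scope ring_scope.

(* Given X^{t-1} = x the tasks move independently, so W_i(X^t) is a weighted
   sum of independent indicators [task l lands on i], and its conditional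
   variance is \sum_l w_l^2 p_l(i) (1 - p_l(i)).  For a task on processor k,
   p (1 - p) is at most the probability of leaving k at i = k and at most p
   elsewhere; with w_l^2 <= w_l each task contributes at most w_l times the
   expected cost \sum_j q_kj (1/s_k + 1/s_j) of its move (q_kj the jump rate
   from k to j), and summing w_l q_kj over the tasks on k gives
   W_k q_kj = f_kj. *)

Section ProductMean.
Variables (R : comPzRingType) (V T : finType).

Definition product_mean (F : T -> V -> R) (f : {ffun T -> V} -> R) : R :=
  \sum_(y : {ffun T -> V}) (\prod_l F l (y l)) * f y.

Lemma sum_mul_eq_indicator (a : V -> R) (i : V) : \sum_j a j * (j == i)%:R = a i.
Proof.
by rewrite (bigD1 i) //= eqxx mulr1 big1 ?addr0 // => j /negbTE ->; rewrite mulr0.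
Qed.

Lemma prod_eq_indicator (a : T -> R) (m : T) :
  \prod_l (if l == m then a l else 1) = a m.
Proof. by rewrite (bigD1 m) //= eqxx big1 ?mulr1 // => l /negbTE ->. Qed.

Definition occupancy (w : T -> R) (i : V) (y : {ffun T -> V}) : R :=
  \sum_m w m * (y m == i)%:R.

Variable F : T -> V -> R.

Lemma eq_product_mean (f g : {ffun T -> V} -> R) :
  f =1 g -> product_mean F f = product_mean F g.
Proof. by move=> fg; apply: eq_bigr => y _; rewrite fg. Qed.

Lemma product_mean_sum (I : finType) (f : I -> {ffun T -> V} -> R) :
  product_mean F (fun y => \sum_k f k y) = \sum_k product_mean F (f k).
Proof.
by rewrite /product_mean; under eq_bigr do rewrite mulr_sumr; rewrite exchange_big.
Qed.

Lemma product_meanZ (c : R) (f : {ffun T -> V} -> R) :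
  product_mean F (fun y => c * f y) = c * product_mean F f.
Proof. by rewrite /product_mean mulr_sumr; apply: eq_bigr => y _; rewrite mulrCA. Qed.

Lemma product_mean_prod (g : T -> V -> R) :
  product_mean F (fun y => \prod_l g l (y l)) = \prod_l \sum_j F l j * g l j.
Proof. by rewrite bigA_distr_bigA; apply: eq_bigr => y _; rewrite big_split. Qed.

Hypothesis F_sum1 : forall l, \sum_j F l j = 1.

Lemma product_mean_coord (m : T) (h : V -> R) :
  product_mean F (fun y => h (y m)) = \sum_j F m j * h j.
Proof.
transitivity (product_mean F (fun y => \prod_l (if l == m then h (y l) else 1))).
  by apply: eq_bigr => y _; rewrite (prod_eq_indicator (fun l => h (y l))).
rewrite (product_mean_prod (fun l j => if l == m then h j else 1)).
rewrite -(prod_eq_indicator (fun l => \sum_j F l j * h j) m).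
apply: eq_bigr => l _; case: (l == m) => //.
by under eq_bigr do rewrite mulr1; rewrite F_sum1.
Qed.

Lemma product_mean_coord2 (m n : T) (h k : V -> R) : m != n ->
  product_mean F (fun y => h (y m) * k (y n)) =
  (\sum_j F m j * h j) * (\sum_j F n j * k j).
Proof.
move=> mn; pose g l j := (if l == m then h j else 1) * (if l == n then k j else 1).
transitivity (product_mean F (fun y => \prod_l g l (y l))).
  apply: eq_bigr => y _; rewrite big_split /=.
  rewrite (prod_eq_indicator (fun l => h (y l))).
  by rewrite (prod_eq_indicator (fun l => k (y l))).
rewrite (product_mean_prod g).
rewrite -(prod_eq_indicator (fun l => \sum_j F l j * h j) m).
rewrite -(prod_eq_indicator (fun l => \sum_j F l j * k j) n) -big_split /=.
apply: eq_bigr => l _; rewrite /g.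
have [-> | _] := eqVneq l m.
  by rewrite (negbTE mn) mulr1; under eq_bigr do rewrite mulr1.
case: (l == n); first by rewrite mul1r; under eq_bigr do rewrite mul1r.
by rewrite mulr1; under eq_bigr do rewrite !mulr1; rewrite F_sum1.
Qed.

Lemma product_mean_indicator2 (m n : T) (i : V) :
  product_mean F (fun y => (y m == i)%:R * (y n == i)%:R) =
  F m i * F n i + (m == n)%:R * (F m i - F m i ^+ 2).
Proof.
have [<- | mn] := eqVneq m n.
  rewrite mul1r addrC -expr2 subrK.
  transitivity (product_mean F (fun y => (y m == i)%:R)).
    by apply: eq_bigr => y _; rewrite -natrM mulnb andbb.
  by rewrite (product_mean_coord m (fun j => (j == i)%:R)) sum_mul_eq_indicator.
pose ind j := (j == i)%:R : R.
by rewrite mul0r addr0 (product_mean_coord2 ind ind mn) !sum_mul_eq_indicator.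
Qed.

Lemma product_variance_occupancy (w : T -> R) (i : V) :
  product_mean F (fun y => occupancy w i y ^+ 2) -
    product_mean F (occupancy w i) ^+ 2 =
  \sum_m w m ^+ 2 * (F m i - F m i ^+ 2).
Proof.
set occ := occupancy w i.
have mean_occ : product_mean F occ = \sum_m w m * F m i.
  rewrite product_mean_sum; apply: eq_bigr => m _.
  rewrite product_meanZ (product_mean_coord m (fun j => (j == i)%:R)).
  by rewrite sum_mul_eq_indicator.
have mean_occ2 : product_mean F (fun y => occ y ^+ 2) =
    \sum_m \sum_n w m * w n * (F m i * F n i + (m == n)%:R * (F m i - F m i ^+ 2)).
  transitivity (product_mean F (fun y => \sum_m \sum_n
      w m * w n * ((y m == i)%:R * (y n == i)%:R))).
    apply: eq_bigr => y _; congr (_ * _); rewrite /occ expr2 mulr_suml.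
    by apply: eq_bigr => m _; rewrite mulr_sumr; apply: eq_bigr => n _; ring.
  rewrite product_mean_sum; apply: eq_bigr => m _.
  rewrite product_mean_sum; apply: eq_bigr => n _.
  by rewrite product_meanZ product_mean_indicator2.
rewrite mean_occ mean_occ2 expr2 mulr_suml -sumrB; apply: eq_bigr => m _.
rewrite mulr_sumr -sumrB (bigD1 m) //= eqxx big1 ?addr0; first by rewrite mul1r; ring.
by move=> n /negbTE; rewrite eq_sym => ->; rewrite mul0r; ring.
Qed.

End ProductMean.

Section Protocol.
Variables (R : realFieldType) (V T : finType) (e : rel V).
Variables (s : V -> R) (w : T -> R).

Definition jump_rate (x : state V T) (k j : V) : R :=
  (deg e k)%:R^-1 * move_prob e s w x k j.

Definition exit_cost (x : state V T) (k : V) : R :=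
  \sum_(j | e k j) jump_rate x k j * (1 / s k + 1 / s j).

Lemma load_occupancy (i : V) (y : state V T) : load w y i = occupancy w i y.
Proof.
rewrite /load big_mkcond /=; apply: eq_bigr => m _.
by case: (y m == i); rewrite ?mulr1 ?mulr0.
Qed.

Lemma sum_load_mul (x : state V T) (c : V -> R) :
  \sum_i load w x i * c i = \sum_m w m * c (x m).
Proof.
under eq_bigr do rewrite load_occupancy mulr_suml.
rewrite exchange_big /=; apply: eq_bigr => m _.
under eq_bigr do rewrite mulrAC eq_sym.
by rewrite (sum_mul_eq_indicator (fun i => w m * c i)).
Qed.

Lemma cond_exp_product_mean (mu : state V T -> R) (t : nat) (x : state V T)
    (f : state V T -> R) :
  law e s w mu t.-1 x != 0 ->
  cond_exp e s w mu t x f = product_mean (step_prob e s w x) f.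
Proof.
move=> law_neq0; rewrite /cond_exp; under eq_bigr do rewrite -mulrA.
by rewrite -mulr_sumr mulrAC divff ?mul1r.
Qed.

Lemma step_prob_stay (x : state V T) (l : T) :
  step_prob e s w x l (x l) = 1 - \sum_(k | e (x l) k) jump_rate x (x l) k.
Proof. by rewrite /step_prob eqxx. Qed.

Hypothesis e_irr : irreflexive e.

Lemma sum_step_prob_move (x : state V T) (l : T) (c : V -> R) :
  \sum_(j | j != x l) step_prob e s w x l j * c j =
  \sum_(j | e (x l) j) jump_rate x (x l) j * c j.
Proof.
rewrite big_mkcond [RHS]big_mkcond /=; apply: eq_bigr => j _.
rewrite /step_prob; case: eqVneq => [->|_]; first by rewrite e_irr.
by case: (e (x l) j); rewrite ?mul0r.
Qed.

Lemma step_prob_sum1 (x : state V T) (l : T) : \sum_j step_prob e s w x l j = 1.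
Proof.
rewrite (bigD1 (x l)) //= step_prob_stay.
rewrite [X in _ + X](eq_bigr (fun j => step_prob e s w x l j * 1)) => [|j _].
  by rewrite sum_step_prob_move; under [X in _ + X]eq_bigr do rewrite mulr1; rewrite subrK.
by rewrite mulr1.
Qed.

Lemma cond_var_step (mu : state V T -> R) (t : nat) (x : state V T) (i : V) :
  law e s w mu t.-1 x != 0 ->
  cond_var e s w mu t x i =
  \sum_m w m ^+ 2 * (step_prob e s w x m i - step_prob e s w x m i ^+ 2).
Proof.
move=> law_neq0; rewrite /cond_var !cond_exp_product_mean //.
rewrite -(product_variance_occupancy (step_prob_sum1 x) w i).
rewrite (eq_product_mean _ (load_occupancy i)).
by congr (_ - _); apply: eq_product_mean => y; rewrite load_occupancy.
Qed.

Hypothesis s_pos : forall i, 0 < s i.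
Hypothesis w_range : forall l, 0 < w l <= 1.

Lemma alpha_gt0 (i : V) : 0 < alpha s.
Proof.
rewrite /alpha mulr_gt0 //; apply: lt_le_trans (s_pos i) _.
by rewrite /smax (bigD1 i) //= le_max lexx.
Qed.

Lemma load_ge0 (x : state V T) (i : V) : 0 <= load w x i.
Proof. by apply: sumr_ge0 => l _; case/andP: (w_range l) => /ltW. Qed.

Lemma jump_rate_ge0 (x : state V T) (k j : V) : 0 <= jump_rate x k j.
Proof.
rewrite /jump_rate /move_prob mulr_ge0 ?invr_ge0 ?ler0n //; case: ifP => // drop.
have inv_gt0 (r : R) : 0 < r -> 0 < 1 / r by move=> r_gt0; rewrite divr_gt0.
have diff_ge0 : 0 <= ell s w x k - ell s w x j.
  exact: ltW (lt_trans (inv_gt0 _ (s_pos j)) drop).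
have S_gt0 : 0 < 1 / s k + 1 / s j by rewrite addr_gt0 ?inv_gt0.
rewrite mulr_ge0 ?divr_ge0 ?ler0n //; apply: mulr_ge0 (load_ge0 x k).
by apply: mulr_ge0; apply: ltW; [exact: alpha_gt0 k | exact: S_gt0].
Qed.

Lemma exit_cost_ge0 (x : state V T) (k : V) : 0 <= exit_cost x k.
Proof.
apply: sumr_ge0 => j _; rewrite mulr_ge0 ?jump_rate_ge0 //.
by rewrite addr_ge0 // divr_ge0 // ltW.
Qed.

(* A task on [x m] stays with probability [p = 1 - \sum_j jump_rate], and
   [p - p^2] is at most [1 - p] at [x m] and at most [p] elsewhere. *)
Lemma step_variance_le_exit_cost (x : state V T) (m : T) :
  \sum_i (step_prob e s w x m i - step_prob e s w x m i ^+ 2) / s i <=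
  exit_cost x (x m).
Proof.
set p := step_prob e s w x m.
have split_eq : \sum_i (if i == x m then 1 - p i else p i) / s i = exit_cost x (x m).
  rewrite (bigD1 (x m)) //= eqxx /exit_cost.
  under [RHS]eq_bigr do rewrite mulrDr; rewrite big_split /= -mulr_suml.
  congr (_ + _); first by rewrite /p step_prob_stay div1r; ring.
  rewrite -(sum_step_prob_move _ _ (fun i => 1 / s i)).
  by apply: eq_bigr => i /negbTE ->; rewrite div1r.
rewrite -split_eq; apply: ler_sum => i _.
apply: ler_wpM2r; first by rewrite invr_ge0 ltW.
case: ifP => _; last by rewrite gerBl sqr_ge0.
rewrite -subr_ge0 (_ : _ - _ = (1 - p i) ^+ 2) ?sqr_ge0 //; ring.
Qed.

Lemma load_mul_jump_rate (x : state V T) (i j : V) :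
  e i j -> 1 / s j < ell s w x i - ell s w x j ->
  load w x i * jump_rate x i j = flow e s w x i j.
Proof.
move=> eij drop; have si := s_pos i; have sj := s_pos j.
have ell_i_gt0 : 0 < ell s w x i.
  have ell_j_ge0 : 0 <= ell s w x j by rewrite divr_ge0 ?load_ge0 ?ltW.
  by apply: le_lt_trans ell_j_ge0 _; rewrite -subr_gt0 (lt_trans _ drop) ?divr_gt0.
have load_neq0 : load w x i != 0.
  by apply: contraTneq ell_i_gt0 => load0; rewrite /ell load0 mul0r ltxx.
have deg_gt0 : (0 < deg e i)%N by apply/card_gt0P; exists j; rewrite inE.
have deg_neq0 : (deg e i)%:R != 0 :> R by rewrite pnatr_eq0 -lt0n.
have dmax_neq0 : (dmax e i j)%:R != 0 :> R.
  by rewrite pnatr_eq0 -lt0n /dmax leq_max deg_gt0.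
have alpha_neq0 := lt0r_neq0 (alpha_gt0 i).
rewrite /jump_rate /move_prob drop /flow; field.
by rewrite load_neq0 alpha_neq0 dmax_neq0 deg_neq0 !gt_eqF ?addr_gt0 ?divr_gt0.
Qed.

Lemma sum_flow (x : state V T) :
  \sum_i \sum_(j | e i j && (1 / s j < ell s w x i - ell s w x j))
     flow e s w x i j * (1 / s i + 1 / s j) =
  \sum_i load w x i * exit_cost x i.
Proof.
apply: eq_bigr => i _; rewrite big_mkcondr /= /exit_cost mulr_sumr.
apply: eq_bigr => j eij; case: ifP => drop.
  by rewrite mulrA load_mul_jump_rate.
by rewrite /jump_rate /move_prob drop !(mulr0, mul0r).
Qed.

End Protocol.

Theorem lemma34 (R : realFieldType) (V T : finType) (e : rel V)
  (e_sym : symmetric e) (e_irr : irreflexive e)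
  (s : V -> R) (s_pos : forall i, 0 < s i)
  (w : T -> R) (w_range : forall l, 0 < w l <= 1)
  (mu : state V T -> R) (mu_ge0 : forall x, 0 <= mu x) (mu_sum : \sum_x mu x = 1)
  (x : state V T) (t : nat) (t_ge1 : (1 <= t)%N)
  (hx : 0 < law e s w mu t.-1 x) :
  \sum_(i : V) cond_var e s w mu t x i / s i <=
  \sum_(i : V) \sum_(j : V | e i j && (1 / s j < ell s w x i - ell s w x j))
     flow e s w x i j * (1 / s i + 1 / s j).
Proof.
rewrite (sum_flow e s_pos w_range) sum_load_mul.
under eq_bigr do rewrite (cond_var_step e_irr _ (lt0r_neq0 hx)) mulr_suml.
rewrite exchange_big /=; apply: ler_sum => m _.
under eq_bigr do rewrite -mulrA; rewrite -mulr_sumr.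
have [w_gt0 w_le1] := andP (w_range m).
apply: le_trans (ler_wpM2l (sqr_ge0 (w m))
  (step_variance_le_exit_cost w e_irr s_pos x m)) _.
apply: ler_wpM2r; first exact: (exit_cost_ge0 e s_pos w_range).
by rewrite expr2; exact: ler_piMr (ltW w_gt0) w_le1.
Qed.
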